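(* Let $G$ be a topological group, $\xi=(E\xrightarrow{p}X)$ a numerable principal $G$-bundle over a pointed space $(X,* )$, pointed by $\tilde*\in p^{-1}( * )$, with gauge group $\mathcal G$, and let $\mathrm{res}:\mathcal G\to G$ be the homomorphism defined by $\chi(\tilde* )=\tilde*\cdot\mathrm{res}(\chi)$. If $G$ is SIN, then $\mathrm{res}$ is uniformly continuous. If $G$ is path-connected, then $\mathrm{res}$ is surjective.
   Context: SIN: the identity has a fundamental system of conjugation-invariant neighbourhoods. The gauge group $\mathcal G$ is the group of $G$-equivariant homeomorphisms $\chi:E\to E$ with $p\chi=p$. Let $\gamma:E\times_XE\to G$ be defined by $y=z\cdot\gamma(y,z)$; $\mathcal V_G$ is the set of open symmetric neighbourhoods of the identity in $G$. $\mathcal G$ carries the uniform structure with fundamental entourages $\mathcal O^{\mathcal G}(K,V)=\{(\chi,\tilde\chi):\gamma(\chi(z),\tilde\chi(z))\in V\ \forall z\in p^{-1}(K)\}$, $K\subset X$ compact, $V\in\mathcal V_G$. $G$ carries the uniform structure with entourages $\{(\tilde g,g):\tilde gg^{-1}\in V\}$, $V\in\mathcal V_G$. *)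

From HB Require Import structures.
From mathcomp Require Import all_boot all_order all_algebra.
From mathcomp Require Import all_classical all_reals all_analysis.
From mathcomp Require Import Rstruct Rstruct_topology.
From Stdlib Require Import Rdefinitions.

Set Implicit Arguments.
Unset Strict Implicit.
Unset Printing Implicit Defensive.

Import Order.TTheory GRing.Theory Num.Theory.
Local Open Scope classical_set_scope.
Local Open Scope ring_scope.

Notation Rl := Rdefinitions.R.

Definition is_topgroup (G : topologicalType) (mul : G -> G -> G)
  (inv : G -> G) (one : G) : Prop :=
  (forall a b c, mul a (mul b c) = mul (mul a b) c) /\
  (forall a, mul one a = a) /\ (forall a, mul a one = a) /\
  (forall a, mul (inv a) a = one) /\ (forall a, mul a (inv a) = one) /\
  continuous (fun q : G * G => mul q.1 q.2) /\ continuous inv.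

Definition VG (G : topologicalType) (inv : G -> G) (one : G) (V : set G) : Prop :=
  open V /\ V one /\ (forall g, V g -> V (inv g)).

Definition SIN (G : topologicalType) (mul : G -> G -> G) (inv : G -> G)
  (one : G) : Prop :=
  forall U, nbhs one U -> exists V, nbhs one V /\ V `<=` U /\
    (forall g v, V v -> V (mul (mul g v) (inv g))).

Definition path_connected (G : topologicalType) : Prop :=
  forall a b : G, exists f : Rl -> G,
    {within `[0%R, 1%R], continuous f} /\ f 0%R = a /\ f 1%R = b.

Definition right_action (G E : topologicalType) (mul : G -> G -> G) (one : G)
  (act : E -> G -> E) : Prop :=
  continuous (fun q : E * G => act q.1 q.2) /\
  (forall z, act z one = z) /\
  (forall z g h, act (act z g) h = act z (mul g h)).

Definition local_trivialization (G E X : topologicalType) (mul : G -> G -> G)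
  (p : E -> X) (act : E -> G -> E) (U : set X) : Prop :=
  exists (h : X * G -> E) (k : E -> X * G),
    {within U `*` setT, continuous h} /\
    {within p @^-1` U, continuous k} /\
    (forall x g, U x -> p (h (x, g)) = x) /\
    (forall x g g', U x -> h (x, mul g g') = act (h (x, g)) g') /\
    (forall x g, U x -> k (h (x, g)) = (x, g)) /\
    (forall z, U (p z) -> h (k z) = z).

Definition numerable_cover (X : topologicalType) (I : choiceType)
  (U : I -> set X) : Prop :=
  (forall i, open (U i)) /\
  exists u : I -> X -> Rl,
    (forall i, continuous (u i)) /\
    (forall i x, (0 <= u i x)%R /\ (u i x <= 1)%R) /\
    (forall i, [set x | u i x != 0%R] `<=` U i) /\
    (forall x : X, exists2 N : set X, nbhs x N &
        finite_set [set i | exists2 y, N y & u i y != 0%R]) /\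
    (forall x, (\sum_(i \in [set i | u i x != 0%R]) u i x)%R = 1%R).

Definition numerable_principal_bundle (G E X : topologicalType)
  (mul : G -> G -> G) (one : G) (p : E -> X) (act : E -> G -> E) : Prop :=
  continuous p /\ right_action mul one act /\
  (forall z g, p (act z g) = p z) /\
  exists (I : choiceType) (U : I -> set X),
    numerable_cover U /\ (forall x, exists i, U i x) /\
    (forall i, local_trivialization mul p act (U i)).

Definition gauge (G E X : topologicalType) (p : E -> X) (act : E -> G -> E)
  (chi : E -> E) : Prop :=
  continuous chi /\
  (exists chi' : E -> E, continuous chi' /\ cancel chi chi' /\ cancel chi' chi) /\
  (forall z g, chi (act z g) = act (chi z) g) /\
  (forall z, p (chi z) = p z).

From HB Require Import structures.
From mathcomp Require Import all_boot all_order all_algebra.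
From mathcomp Require Import all_classical all_reals all_analysis.
From mathcomp Require Import Rstruct Rstruct_topology.

(* Gauge transformations act on the fibre over [base] by right translations,
   and the action is free, so two gauge transformations [chi], [chi'] satisfy
   [res chi = res chi' * gamma (chi tbase) (chi' tbase)]. Hence
   [res chi * (res chi')^-1] is a conjugate of [gamma (chi tbase) (chi' tbase)],
   and under SIN a conjugation-invariant neighbourhood inside [V] shows that
   [K = {base}] already suffices.
   For surjectivity, pick a chart [U] of the numerable cover and a bump function
   [phi] at [base] that vanishes outside a closed subset of [U]. For a path [f] from
   [one] to a conjugate of [g], left multiplication of the fibre coordinate by
   [f (phi x)] is a gauge transformation that is the identity outside the chart
   and acts on [tbase] by [g]. *)

Set Implicit Arguments.
Unset Strict Implicit.
Unset Printing Implicit Defensive.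

Import Order.TTheory GRing.Theory Num.Theory numFieldNormedType.Exports.
Local Open Scope classical_set_scope.
Local Open Scope ring_scope.

Lemma VG_sub_nbhs (G : topologicalType) (mul : G -> G -> G) (inv : G -> G)
    (one : G) V :
  is_topgroup mul inv one -> nbhs one V -> exists W, VG inv one W /\ W `<=` V.
Proof.
move=> [mulA [mul1g [mulg1 [mulVg [_ [_ inv_cont]]]]]] V1.
have inv1 : inv one = one by rewrite -[LHS]mulg1 mulVg.
have invK a : inv (inv a) = a by rewrite -[LHS]mulg1 -(mulVg a) mulA mulVg mul1g.
exists (V° `&` inv @^-1` V°); split; last by move=> g [/interior_subset].
split; last split.
- apply: openI; first exact: open_interior.
  by apply: open_comp => [x _|]; [exact: inv_cont | exact: open_interior].
- by split; rewrite /= ?inv1; exact: V1.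
- by move=> g [Vg Vig]; split; rewrite //= invK.
Qed.

Lemma continuous_within_comp (T S V : topologicalType) (A : set S)
    (f : S -> V) (g : T -> S) :
  {within A, continuous f} -> continuous g -> (forall x, A (g x)) ->
  continuous (f \o g).
Proof.
move=> f_cont g_cont gA x W /=.
have fW : f @ within A (nbhs (g x)) --> f (g x).
  by rewrite nbhs_subspace_in //; exact: f_cont.
by move=> /fW /g_cont; apply: (filterS (F := nbhs x)) => y /(_ (gA y)).
Qed.

Lemma bump_function (T : topologicalType) (R : realType) (u : T -> R) (x0 : T) :
  continuous u -> 0 < u x0 ->
  exists phi : T -> R, [/\ continuous phi, forall x, 0 <= phi x <= 1,
    phi x0 = 1 & forall x, u x <= u x0 / 2 -> phi x = 0].
Proof.
move=> u_cont ux0_gt0; pose s := 2 / u x0.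
have us_le0 x : u x <= u x0 / 2 -> u x * s - 1 <= 0.
  move=> ux; rewrite subr_le0 -(ler_pM2r ux0_gt0) mul1r /s mulrA divfK ?gt_eqF //.
  by rewrite -ler_pdivlMr.
exists (fun x => Num.min 1 (Num.max 0 (u x * s - 1))); split.
- move=> x; apply: (@continuous_min R T (fun=> 1)); first exact: cst_continuous.
  apply: (@continuous_max R T (fun=> 0)); first exact: cst_continuous.
  by apply: cvgB; [apply: cvgM; [exact: u_cont | exact: cvg_cst] | exact: cvg_cst].
- by move=> x; rewrite ge_min le_min le_max !lexx ler01.
- by rewrite /s mulrC divfK ?gt_eqF // (_ : 2 - 1 = 1) ?max_r ?minxx // -addrA subrr addr0.
- by move=> x /us_le0 ?; rewrite max_l // min_r ?ler01.
Qed.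

Lemma numerable_cover_bump (X : topologicalType) (I : choiceType)
    (U : I -> set X) (x0 : X) :
  numerable_cover U ->
  exists i (O : set X), [/\ U i x0, open O, forall x, U i x \/ O x &
    exists phi : X -> Rl, [/\ continuous phi, forall x, 0 <= phi x <= 1,
      phi x0 = 1 & forall x, O x -> phi x = 0]].
Proof.
move=> [_ [u [u_cont [u01 [u_supp [_ u_sum]]]]]].
have [i ui_neq0] : exists i, u i x0 != 0.
  apply: contrapT => none; move: (u_sum x0).
  rewrite (_ : [set i | u i x0 != 0%R] = set0) ?fsbig_set0; last first.
    by apply/seteqP; split=> j //= uj; apply: none; exists j.
  by move/eqP; rewrite eq_sym oner_eq0.
have ui_gt0 : 0 < u i x0.
  (* [numerable_cover] states its bounds with Stdlib's [Rle]. *)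
  by rewrite lt_neqAle eq_sym ui_neq0; apply/RleP; exact: (u01 i x0).1.
have [phi [phi_cont phi01 phi_x0 phi_small]] := bump_function (u_cont i) ui_gt0.
exists i, [set x | u i x < u i x0 / 2]; split.
- by apply: u_supp; exact: ui_neq0.
- apply: (@open_comp _ _ (u i) [set t | t < u i x0 / 2]); last exact: open_lt.
  by move=> x _; exact: u_cont.
- move=> x; have [small|big] := ltP (u i x) (u i x0 / 2); [by right | left].
  by apply: u_supp; rewrite /= gt_eqF // (lt_le_trans _ big) // divr_gt0.
- by exists phi; split => // x /ltW; exact: phi_small.
Qed.

Section LocalGauge.
Variables (G E X : topologicalType) (mul : G -> G -> G) (inv : G -> G) (one : G).
Variables (p : E -> X) (act : E -> G -> E) (gamma : E -> E -> G).
Variables (U : set X) (h : X * G -> E) (k : E -> X * G).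
Hypothesis mulA : forall a b c, mul a (mul b c) = mul (mul a b) c.
Hypothesis mul1g : forall a, mul one a = a.
Hypothesis mulVg : forall a, mul (inv a) a = one.
Hypothesis mulgV : forall a, mul a (inv a) = one.
Hypothesis mul_cont : continuous (fun q : G * G => mul q.1 q.2).
Hypothesis inv_cont : continuous inv.
Hypothesis p_cont : continuous p.
Hypothesis p_act : forall z g, p (act z g) = p z.
Hypothesis act_gamma : forall y z, p y = p z -> y = act z (gamma y z).
Hypothesis U_open : open U.
Hypothesis h_cont : {within U `*` setT, continuous h}.
Hypothesis k_cont : {within p @^-1` U, continuous k}.
Hypothesis h_over : forall x g, U x -> p (h (x, g)) = x.
Hypothesis h_act : forall x g g', U x -> h (x, mul g g') = act (h (x, g)) g'.
Hypothesis k_h : forall x g, U x -> k (h (x, g)) = (x, g).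

(* The trivialisation axioms give [h (k z) = z] but not [(k z).1 = p z];
   the latter comes from writing [z] as a translate of [h (p z, one)]. *)
Lemma trivialization_coord z :
  U (p z) -> k z = (p z, (k z).2) /\ h (p z, (k z).2) = z.
Proof.
move=> Uz; set e := h (p z, one).
have hz : z = h (p z, gamma z e).
  by rewrite {1}(act_gamma (y := z) (z := e)) /e ?h_over // -h_act // mul1g.
have kz : k z = (p z, gamma z e) by rewrite {1}hz k_h.
by rewrite kz -hz.
Qed.

Lemma act_inj z a b : U (p z) -> act z a = act z b -> a = b.
Proof.
move=> Uz; have [_ hz] := trivialization_coord Uz.
rewrite -hz -!h_act // => /(congr1 k); rewrite !k_h // => -[eab].
by rewrite -(mul1g a) -(mul1g b) -(mulVg (k z).2) -!mulA eab.
Qed.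

Definition local_gauge (d : X -> G) (z : E) : E :=
  if p z \in U then h (p z, mul (d (p z)) (k z).2) else z.

Lemma local_gauge_in d z :
  U (p z) -> local_gauge d z = h (p z, mul (d (p z)) (k z).2).
Proof. by move=> Uz; rewrite /local_gauge mem_set. Qed.

Lemma local_gauge_out d z : ~ U (p z) -> local_gauge d z = z.
Proof. by move=> nUz; rewrite /local_gauge memNset. Qed.

Lemma local_gauge_id d z : d (p z) = one -> local_gauge d z = z.
Proof.
move=> dz; have [Uz|nUz] := pselect (U (p z)); last exact: local_gauge_out.
by rewrite local_gauge_in // dz mul1g; case: (trivialization_coord Uz).
Qed.

Lemma local_gauge_over d z : p (local_gauge d z) = p z.
Proof.
have [Uz|nUz] := pselect (U (p z)); last by rewrite local_gauge_out.
by rewrite local_gauge_in // h_over.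
Qed.

Lemma local_gauge_comp d e z :
  local_gauge d (local_gauge e z) = local_gauge (fun x => mul (d x) (e x)) z.
Proof.
have [Uz|nUz] := pselect (U (p z)); last by rewrite !local_gauge_out.
by rewrite !local_gauge_in ?h_over // k_h //= mulA.
Qed.

Lemma local_gauge_act d z g : local_gauge d (act z g) = act (local_gauge d z) g.
Proof.
have [Uz|nUz] := pselect (U (p z)); last by rewrite !local_gauge_out ?p_act.
have [_ hz] := trivialization_coord Uz.
have zg : act z g = h (p z, mul (k z).2 g) by rewrite h_act // hz.
by rewrite !local_gauge_in ?p_act // zg k_h //= mulA h_act.
Qed.

Lemma local_gauge_conj d z :
  U (p z) ->
  local_gauge d z = act z (mul (inv (k z).2) (mul (d (p z)) (k z).2)).
Proof.
move=> Uz; have [_ hz] := trivialization_coord Uz.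
by rewrite local_gauge_in // -[X in act X _]hz -h_act // mulA mulgV mul1g.
Qed.

Lemma local_gauge_continuous d (O : set X) :
  continuous d -> open O -> (forall x, U x \/ O x) -> (forall x, O x -> d x = one) ->
  continuous (local_gauge d).
Proof.
move=> d_cont O_open UO_cover d_O z.
have preimage_open A : open A -> open (p @^-1` A).
  by move=> A_open; apply: open_comp => // x _; exact: p_cont.
have [Uz|Oz] := UO_cover (p z); last first.
  rewrite /continuous_at local_gauge_id ?d_O //.
  apply: cvg_trans cvg_id; apply: near_eq_cvg.
  apply: filterS (open_nbhs_nbhs (conj (preimage_open _ O_open) Oz)) => w Ow.
  by rewrite local_gauge_id ?d_O.
pose F w := h (p w, mul (d (p w)) (k w).2).
have F_cont : {for z, continuous F}.
  have UG_open : open (U `*` [set: G]).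
    have -> : U `*` [set: G] = fst @^-1` U.
      by apply/seteqP; split=> -[x g] /=; [case | split].
    by apply: open_comp => // -[x g] _; exact: cvg_fst.
  have h_at : {for (p z, mul (d (p z)) (k z).2), continuous h}.
    by move: h_cont; rewrite continuous_open_subspace //; apply; exact: mem_set.
  have k_at : {for z, continuous k}.
    move: k_cont; rewrite continuous_open_subspace; last exact: preimage_open.
    by apply; exact: mem_set.
  apply: continuous_comp h_at; apply: cvg_pair; first exact: p_cont.
  apply: (continuous_comp (f := fun w => (d (p w), (k w).2))
                          (g := fun q => mul q.1 q.2)); last exact: mul_cont.
  apply: cvg_pair => /=; last exact: continuous_comp k_at cvg_snd.
  by apply: continuous_comp; [exact: p_cont | exact: d_cont].
rewrite /continuous_at local_gauge_in //.
apply: cvg_trans F_cont; apply: near_eq_cvg.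
apply: filterS (open_nbhs_nbhs (conj (preimage_open _ U_open) Uz)) => w Uw.
by rewrite local_gauge_in.
Qed.

Lemma local_gauge_gauge d (O : set X) :
  continuous d -> open O -> (forall x, U x \/ O x) -> (forall x, O x -> d x = one) ->
  gauge p act (local_gauge d).
Proof.
move=> d_cont O_open UO_cover d_O.
have inv1 : inv one = one by rewrite -[LHS]mul1g mulgV.
have invd_cont : continuous (inv \o d).
  by move=> x; apply: continuous_comp; [exact: d_cont | exact: inv_cont].
split; first exact: (local_gauge_continuous d_cont O_open).
split; last by split=> *; [exact: local_gauge_act | exact: local_gauge_over].
exists (local_gauge (inv \o d)); split.
  by apply: (local_gauge_continuous invd_cont O_open UO_cover) => x /d_O /= ->.
by split=> z; rewrite local_gauge_comp local_gauge_id //= ?mulVg ?mulgV.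
Qed.

End LocalGauge.

Section GaugeRestriction.
Variables (G E X : topologicalType) (mul : G -> G -> G) (inv : G -> G) (one : G).
Variables (p : E -> X) (act : E -> G -> E) (base : X) (tbase : E).
Variables (gamma : E -> E -> G) (res : (E -> E) -> G).
Hypothesis Ggroup : is_topgroup mul inv one.
Hypothesis bundle : numerable_principal_bundle mul one p act.
Hypothesis p_tbase : p tbase = base.
Hypothesis act_gamma : forall y z, p y = p z -> y = act z (gamma y z).
Hypothesis res_gauge :
  forall chi, gauge p act chi -> chi tbase = act tbase (res chi).

Lemma act_tbase_inj a b : act tbase a = act tbase b -> a = b.
Proof.
have [mulA [mul1g [_ [mulVg _]]]] := Ggroup.
have [_ [_ [_ [I [U [_ [U_cover U_triv]]]]]]] := bundle.
have [i Ui] := U_cover (p tbase).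
have [h [k [_ [_ [h_over [h_act [k_h _]]]]]]] := U_triv i.
exact: (act_inj mulA mul1g mulVg act_gamma h_over h_act k_h Ui).
Qed.

Lemma res_gamma chi chi' : gauge p act chi -> gauge p act chi' ->
  res chi = mul (res chi') (gamma (chi tbase) (chi' tbase)).
Proof.
have [_ [[_ [_ act_mul]] _]] := bundle.
move=> chi_gauge chi'_gauge; apply: act_tbase_inj.
rewrite -act_mul -!res_gauge //; apply: act_gamma.
by rewrite chi_gauge.2.2.2 chi'_gauge.2.2.2.
Qed.

Lemma res_uniformly_continuous : SIN mul inv one ->
  forall V, VG inv one V ->
    exists (K : set X) (W : set G), compact K /\ VG inv one W /\
      forall chi chi', gauge p act chi -> gauge p act chi' ->
        (forall z, K (p z) -> W (gamma (chi z) (chi' z))) ->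
        V (mul (res chi) (inv (res chi'))).
Proof.
move=> sin V [V_open [V1 _]].
have [V0 [V01 [V0V V0_conj]]] := sin V (open_nbhs_nbhs (conj V_open V1)).
have [W [W_VG WV0]] := VG_sub_nbhs Ggroup V01.
exists [set base], W; split; first exact: compact_set1.
split=> // chi chi' chi_gauge chi'_gauge W_gamma.
by rewrite (res_gamma chi_gauge chi'_gauge); apply/V0V/V0_conj/WV0/W_gamma.
Qed.

Lemma res_surjective : path_connected G ->
  forall g, exists chi, gauge p act chi /\ res chi = g.
Proof.
move=> G_path g.
have [mulA [mul1g [mulg1 [mulVg [mulgV [mul_cont inv_cont]]]]]] := Ggroup.
have [p_cont [_ [p_act [I [U [U_num [_ U_triv]]]]]]] := bundle.
have [i [N [Ui_base N_open UN_cover [phi [phi_cont phi01 phi_base phi_N]]]]] :=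
  numerable_cover_bump base U_num.
have [h [k [h_cont [k_cont [h_over [h_act [k_h _]]]]]]] := U_triv i.
set a := (k tbase).2.
have [f [f_cont [f0 f1]]] := G_path one (mul (mul a g) (inv a)).
have d_cont : continuous (f \o phi).
  by apply: continuous_within_comp f_cont phi_cont _ => x; rewrite /= in_itv; exact: phi01.
have d_N x : N x -> (f \o phi) x = one by move=> /phi_N /= ->.
have chi_gauge := local_gauge_gauge mulA mul1g mulVg mulgV mul_cont inv_cont
  p_cont p_act act_gamma (U_num.1 i) h_cont k_cont h_over h_act k_h
  d_cont N_open UN_cover d_N.
exists (local_gauge mul p (U i) h k (f \o phi)); split => //.
apply: act_tbase_inj; rewrite -res_gauge //.
rewrite (local_gauge_conj mulA mul1g mulgV act_gamma h_over h_act k_h) ?p_tbase //.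
by rewrite /= phi_base f1 -/a -mulA mulVg mulg1 mulA mulVg mul1g.
Qed.

End GaugeRestriction.

Unset Implicit Arguments.

Theorem proposition3p2 (G E X : topologicalType)
  (mul : G -> G -> G) (inv : G -> G) (one : G)
  (p : E -> X) (act : E -> G -> E) (base : X) (tbase : E)
  (gamma : E -> E -> G) (res : (E -> E) -> G) :
  is_topgroup mul inv one ->
  numerable_principal_bundle mul one p act ->
  p tbase = base ->
  (* gamma : E x_X E -> G, y = z . gamma(y, z) *)
  (forall y z, p y = p z -> y = act z (gamma y z)) ->
  (* res : gauge group -> G, chi(tbase) = tbase . res(chi) *)
  (forall chi, gauge p act chi -> chi tbase = act tbase (res chi)) ->
  (SIN mul inv one ->
     (* res is uniformly continuous *)
     forall V, VG inv one V ->
       exists (K : set X) (W : set G), compact K /\ VG inv one W /\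
         forall chi chi', gauge p act chi -> gauge p act chi' ->
           (forall z, K (p z) -> W (gamma (chi z) (chi' z))) ->
           V (mul (res chi) (inv (res chi')))) /\
  (path_connected G ->
     forall g, exists chi, gauge p act chi /\ res chi = g).
Proof.
move=> Ggroup bundle p_tbase act_gamma res_gauge; split.
- exact: (res_uniformly_continuous Ggroup bundle p_tbase act_gamma res_gauge).
- exact: (res_surjective Ggroup bundle p_tbase act_gamma res_gauge).
Qed.
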